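(* Let $M^2$ be a surface in $\mathbb E^4$ without flat points, i.e. $(k,\varkappa)\neq(0,0)$ at every point. Then at any point $p$ the mean curvature vector $H=\frac12\operatorname{tr}\sigma$ vanishes if and only if $\varkappa^2-k=0$ at $p$. In particular, $M^2$ is minimal if and only if $\varkappa^2-k=0$ on $M^2$.
   Context: $\mathbb E^4$ carries the standard metric $g$. For a surface $M^2$ parametrized by $z(u,v)$, with $E=g(z_u,z_u)$, $F=g(z_u,z_v)$, $G=g(z_v,z_v)$, $W=\sqrt{EG-F^2}$, second fundamental form $\sigma$, and an orthonormal normal frame $\{e_1,e_2\}$, write $\sigma(z_u,z_u)=c_{11}^1e_1+c_{11}^2e_2$, $\sigma(z_u,z_v)=c_{12}^1e_1+c_{12}^2e_2$, $\sigma(z_v,z_v)=c_{22}^1e_1+c_{22}^2e_2$; put $\Delta_1=c_{11}^1c_{12}^2-c_{11}^2c_{12}^1$, $\Delta_2=c_{11}^1c_{22}^2-c_{11}^2c_{22}^1$, $\Delta_3=c_{12}^1c_{22}^2-c_{12}^2c_{22}^1$, $L=2\Delta_1/W$, $M=\Delta_2/W$, $N=2\Delta_3/W$, and $k=\frac{LN-M^2}{EG-F^2}$, $\varkappa=\frac{EN+GL-2FM}{2(EG-F^2)}$ (these are independent of parametrization and normal frame, $\varkappa$ up to sign). A point is flat if $k=\varkappa=0$. *)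

From Stdlib Require Import Reals.
Open Scope R_scope.

Record V4 := mkV4 { x1 : R; x2 : R; x3 : R; x4 : R }.

Definition v0 : V4 := mkV4 0 0 0 0.
Definition vadd (a b : V4) : V4 :=
  mkV4 (x1 a + x1 b) (x2 a + x2 b) (x3 a + x3 b) (x4 a + x4 b).
Definition vscal (r : R) (a : V4) : V4 :=
  mkV4 (r * x1 a) (r * x2 a) (r * x3 a) (r * x4 a).
Definition g (a b : V4) : R :=
  x1 a * x1 b + x2 a * x2 b + x3 a * x3 b + x4 a * x4 b.

Definition pderiv_u (f df : R -> R -> V4) (u v : R) : Prop :=
  derivable_pt_lim (fun t => x1 (f t v)) u (x1 (df u v)) /\
  derivable_pt_lim (fun t => x2 (f t v)) u (x2 (df u v)) /\
  derivable_pt_lim (fun t => x3 (f t v)) u (x3 (df u v)) /\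
  derivable_pt_lim (fun t => x4 (f t v)) u (x4 (df u v)).
Definition pderiv_v (f df : R -> R -> V4) (u v : R) : Prop :=
  derivable_pt_lim (fun t => x1 (f u t)) v (x1 (df u v)) /\
  derivable_pt_lim (fun t => x2 (f u t)) v (x2 (df u v)) /\
  derivable_pt_lim (fun t => x3 (f u t)) v (x3 (df u v)) /\
  derivable_pt_lim (fun t => x4 (f u t)) v (x4 (df u v)).

(** Pointwise invariants, from the first derivatives zu zv, second
    derivatives zuu zuv zvv and an orthonormal normal frame e1 e2 at a point. *)
Section Invariants.
Variables zu zv zuu zuv zvv e1 e2 : V4.

Definition E_ := g zu zu.
Definition F_ := g zu zv.
Definition G_ := g zv zv.
Definition W := sqrt (E_ * G_ - F_ ^ 2).

(** coefficients of the second fundamental form: sigma(z_i,z_j) is the normal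
    component of z_ij, i.e. g(z_ij,e1) e1 + g(z_ij,e2) e2 *)
Definition c11_1 := g zuu e1.
Definition c11_2 := g zuu e2.
Definition c12_1 := g zuv e1.
Definition c12_2 := g zuv e2.
Definition c22_1 := g zvv e1.
Definition c22_2 := g zvv e2.

Definition sigma_uu : V4 := vadd (vscal c11_1 e1) (vscal c11_2 e2).
Definition sigma_uv : V4 := vadd (vscal c12_1 e1) (vscal c12_2 e2).
Definition sigma_vv : V4 := vadd (vscal c22_1 e1) (vscal c22_2 e2).

Definition Delta1 := c11_1 * c12_2 - c11_2 * c12_1.
Definition Delta2 := c11_1 * c22_2 - c11_2 * c22_1.
Definition Delta3 := c12_1 * c22_2 - c12_2 * c22_1.

Definition L_ := 2 * Delta1 / W.
Definition M_ := Delta2 / W.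
Definition N_ := 2 * Delta3 / W.

Definition kcurv := (L_ * N_ - M_ ^ 2) / (E_ * G_ - F_ ^ 2).
Definition varkappa := (E_ * N_ + G_ * L_ - 2 * F_ * M_) / (2 * (E_ * G_ - F_ ^ 2)).

(** mean curvature vector H = (1/2) tr sigma
      = (G sigma(zu,zu) - 2F sigma(zu,zv) + E sigma(zv,zv)) / (2 (EG - F^2)) *)
Definition Hmean : V4 :=
  vscal (/ (2 * (E_ * G_ - F_ ^ 2)))
    (vadd (vadd (vscal G_ sigma_uu) (vscal (-2 * F_) sigma_uv))
          (vscal E_ sigma_vv)).

End Invariants.

Definition surface_data (D : R -> R -> Prop)
  (z zu zv zuu zuv zvv e1 e2 : R -> R -> V4) : Prop :=
  forall u v, D u v ->
    pderiv_u z zu u v /\ pderiv_v z zv u v /\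
    pderiv_u zu zuu u v /\ pderiv_v zu zuv u v /\ pderiv_v zv zvv u v /\
    0 < E_ (zu u v) * G_ (zv u v) - F_ (zu u v) (zv u v) ^ 2 /\
    g (e1 u v) (e1 u v) = 1 /\ g (e2 u v) (e2 u v) = 1 /\ g (e1 u v) (e2 u v) = 0 /\
    g (e1 u v) (zu u v) = 0 /\ g (e1 u v) (zv u v) = 0 /\
    g (e2 u v) (zu u v) = 0 /\ g (e2 u v) (zv u v) = 0.

From Stdlib Require Import Reals Lra Psatz.
Open Scope R_scope.

(** Fix a point and write a = sigma(z_u,z_u), b = sigma(z_u,z_v),
    c = sigma(z_v,z_v) in the normal frame {e1,e2}, so that Delta1, Delta2,
    Delta3 are the plane cross products a x b, a x c, b x c.  Put
    Delta = EG - F^2 > 0 and h = G a - 2F b + E c, so that H = h / (2 Delta).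

    Unfolding the definitions gives varkappa^2 - k = disc / Delta^3 for an
    explicit polynomial disc, and the heart of the proof is the identity
    E^2 disc = (E w - F u)^2 + Delta u^2 with u = -(h x a), w = -(h x b).
    As Delta > 0 and E > 0, disc = 0 exactly when h is parallel to a, b and
    (since E (h x c) = G u - 2F w) to c.  Without flat points a, b, c span
    the normal plane, so this forces h = 0, i.e. H = 0. *)

Definition cross (p1 p2 q1 q2 : R) : R := p1 * q2 - p2 * q1.

(** Component of G sigma(z_u,z_u) - 2F sigma(z_u,z_v) + E sigma(z_v,z_v)
    along one normal direction, given the coefficients x, y, z there. *)
Definition mean_coef (E F G x y z : R) : R := G * x - 2 * F * y + E * z.

(** Numerator of varkappa^2 - k once all denominators are cleared. *)
Definition disc (E F G D1 D2 D3 : R) : R :=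
  (E * D3 + G * D1 - F * D2) ^ 2 - (E * G - F ^ 2) * (4 * D1 * D3 - D2 ^ 2).

Lemma parallel_to_independent_zero (h1 h2 p1 p2 q1 q2 : R) :
  cross h1 h2 p1 p2 = 0 -> cross h1 h2 q1 q2 = 0 -> cross p1 p2 q1 q2 <> 0 ->
  h1 = 0 /\ h2 = 0.
Proof.
  intros Hp Hq Hpq.
  assert (Id1 : h1 * cross p1 p2 q1 q2
                = p1 * cross h1 h2 q1 q2 - q1 * cross h1 h2 p1 p2)
    by (unfold cross; ring).
  assert (Id2 : h2 * cross p1 p2 q1 q2
                = p2 * cross h1 h2 q1 q2 - q2 * cross h1 h2 p1 p2)
    by (unfold cross; ring).
  rewrite Hp, Hq in Id1, Id2.
  split; apply (Rmult_eq_reg_r (cross p1 p2 q1 q2)); auto; lra.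
Qed.

Lemma parallel_to_spanning_zero (h1 h2 a1 a2 b1 b2 c1 c2 : R) :
  cross h1 h2 a1 a2 = 0 -> cross h1 h2 b1 b2 = 0 -> cross h1 h2 c1 c2 = 0 ->
  ~ (cross a1 a2 b1 b2 = 0 /\ cross a1 a2 c1 c2 = 0 /\ cross b1 b2 c1 c2 = 0) ->
  h1 = 0 /\ h2 = 0.
Proof.
  intros Ha Hb Hc Hspan.
  destruct (Req_dec (cross a1 a2 b1 b2) 0) as [Hab | Hab];
    [ destruct (Req_dec (cross a1 a2 c1 c2) 0) as [Hac | Hac];
      [ destruct (Req_dec (cross b1 b2 c1 c2) 0) as [Hbc | Hbc] | ] | ].
  - exfalso; tauto.
  - exact (parallel_to_independent_zero _ _ _ _ _ _ Hb Hc Hbc).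
  - exact (parallel_to_independent_zero _ _ _ _ _ _ Ha Hc Hac).
  - exact (parallel_to_independent_zero _ _ _ _ _ _ Ha Hb Hab).
Qed.

Section Discriminant.

Variables E F G : R.
Hypothesis E_pos : 0 < E.
Hypothesis Delta_pos : 0 < E * G - F ^ 2.

(** The discriminant is, up to the factor E^2, a positive definite
    quadratic form in u = E D2 - 2F D1 and w = E D3 - G D1. *)
Lemma disc_zero_iff (D1 D2 D3 : R) :
  disc E F G D1 D2 D3 = 0 <->
  E * D2 - 2 * F * D1 = 0 /\ E * D3 - G * D1 = 0.
Proof.
  set (u := E * D2 - 2 * F * D1); set (w := E * D3 - G * D1).
  assert (Sos : E ^ 2 * disc E F G D1 D2 D3
                = (E * w - F * u) ^ 2 + (E * G - F ^ 2) * u ^ 2)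
    by (unfold disc, u, w; ring).
  split.
  - intro Hdisc; rewrite Hdisc in Sos.
    assert (Sq1 : 0 <= (E * w - F * u) ^ 2) by apply pow2_ge_0.
    assert (Sq2 : 0 <= (E * G - F ^ 2) * u ^ 2)
      by (apply Rmult_le_pos; [lra | apply pow2_ge_0]).
    assert (Hu2 : u ^ 2 = 0).
    { apply (Rmult_eq_reg_l (E * G - F ^ 2)); lra. }
    assert (Hu : u = 0) by nra.
    rewrite Hu in Sos.
    assert (Hw : E * w = 0) by nra.
    split; [exact Hu | nra].
  - intros [Hu Hw]; rewrite Hu, Hw in Sos.
    assert (HE2 : E ^ 2 <> 0) by (apply pow_nonzero; lra).
    apply (Rmult_eq_reg_l (E ^ 2)); [lra | exact HE2].
Qed.

Lemma disc_zero_iff_mean_zero (a1 a2 b1 b2 c1 c2 : R) :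
  ~ (cross a1 a2 b1 b2 = 0 /\ cross a1 a2 c1 c2 = 0 /\ cross b1 b2 c1 c2 = 0) ->
  disc E F G (cross a1 a2 b1 b2) (cross a1 a2 c1 c2) (cross b1 b2 c1 c2) = 0 <->
  mean_coef E F G a1 b1 c1 = 0 /\ mean_coef E F G a2 b2 c2 = 0.
Proof.
  intro Hspan.
  rewrite disc_zero_iff.
  set (h1 := mean_coef E F G a1 b1 c1); set (h2 := mean_coef E F G a2 b2 c2).
  assert (Ha : cross h1 h2 a1 a2
               = - (E * cross a1 a2 c1 c2 - 2 * F * cross a1 a2 b1 b2))
    by (unfold h1, h2, mean_coef, cross; ring).
  assert (Hb : cross h1 h2 b1 b2
               = - (E * cross b1 b2 c1 c2 - G * cross a1 a2 b1 b2))
    by (unfold h1, h2, mean_coef, cross; ring).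
  assert (Hc : E * cross h1 h2 c1 c2
               = G * (E * cross a1 a2 c1 c2 - 2 * F * cross a1 a2 b1 b2)
                 - 2 * F * (E * cross b1 b2 c1 c2 - G * cross a1 a2 b1 b2))
    by (unfold h1, h2, mean_coef, cross; ring).
  split.
  - intros [Hu Hw].
    rewrite Hu, Hw in Hc; rewrite Hu in Ha; rewrite Hw in Hb.
    apply (parallel_to_spanning_zero h1 h2 a1 a2 b1 b2 c1 c2); [lra | lra | | exact Hspan].
    apply (Rmult_eq_reg_l E); lra.
  - intros [Hh1 Hh2].
    assert (Hha : cross h1 h2 a1 a2 = 0) by (unfold cross; rewrite Hh1, Hh2; ring).
    assert (Hhb : cross h1 h2 b1 b2 = 0) by (unfold cross; rewrite Hh1, Hh2; ring).
    split; lra.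
Qed.

End Discriminant.

Section PointInvariants.

Variables zu zv zuu zuv zvv e1 e2 : V4.
Hypothesis regular : 0 < E_ zu * G_ zv - F_ zu zv ^ 2.

Lemma E_pos_regular : 0 < E_ zu.
Proof.
  assert (HE : 0 <= E_ zu) by (unfold E_, g; nra).
  destruct (Req_dec (E_ zu) 0) as [HE0 | HE0]; [| lra].
  rewrite HE0 in regular; nra.
Qed.

Lemma W_spec : 0 < W zu zv /\ W zu zv * W zu zv = E_ zu * G_ zv - F_ zu zv ^ 2.
Proof.
  unfold W; split; [apply sqrt_lt_R0 | apply sqrt_sqrt]; lra.
Qed.

Lemma varkappa_sq_minus_kcurv :
  varkappa zu zv zuu zuv zvv e1 e2 ^ 2 - kcurv zu zv zuu zuv zvv e1 e2
  = disc (E_ zu) (F_ zu zv) (G_ zv)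
      (Delta1 zuu zuv e1 e2) (Delta2 zuu zvv e1 e2) (Delta3 zuv zvv e1 e2)
    / (E_ zu * G_ zv - F_ zu zv ^ 2) ^ 3.
Proof.
  destruct W_spec as [HW HWW].
  unfold varkappa, kcurv, L_, M_, N_, disc.
  fold (W zu zv).
  rewrite <- HWW.
  field; lra.
Qed.

Lemma not_flat_spanning :
  ~ (kcurv zu zv zuu zuv zvv e1 e2 = 0 /\ varkappa zu zv zuu zuv zvv e1 e2 = 0) ->
  ~ (Delta1 zuu zuv e1 e2 = 0 /\ Delta2 zuu zvv e1 e2 = 0 /\ Delta3 zuv zvv e1 e2 = 0).
Proof.
  intros Hnf [H1 [H2 H3]]; apply Hnf.
  unfold kcurv, varkappa, L_, M_, N_; rewrite H1, H2, H3.
  split; unfold Rdiv; ring.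
Qed.

Lemma Hmean_in_frame :
  Hmean zu zv zuu zuv zvv e1 e2
  = vscal (/ (2 * (E_ zu * G_ zv - F_ zu zv ^ 2)))
      (vadd
        (vscal (mean_coef (E_ zu) (F_ zu zv) (G_ zv)
                  (c11_1 zuu e1) (c12_1 zuv e1) (c22_1 zvv e1)) e1)
        (vscal (mean_coef (E_ zu) (F_ zu zv) (G_ zv)
                  (c11_2 zuu e2) (c12_2 zuv e2) (c22_2 zvv e2)) e2)).
Proof.
  unfold Hmean, sigma_uu, sigma_uv, sigma_vv, mean_coef, vscal, vadd; simpl.
  f_equal; ring.
Qed.

End PointInvariants.

Lemma vscal_eq_v0 (r : R) (x : V4) : r <> 0 -> (vscal r x = v0 <-> x = v0).
Proof.
  intro Hr; split; intro Hx.
  - assert (Hback : vscal (/ r) (vscal r x) = x)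
      by (destruct x; unfold vscal; simpl; f_equal; field; exact Hr).
    rewrite <- Hback, Hx; unfold vscal, v0; simpl; f_equal; ring.
  - rewrite Hx; unfold vscal, v0; simpl; f_equal; ring.
Qed.

Lemma orthonormal_combination_zero (s t : R) (e1 e2 : V4) :
  g e1 e1 = 1 -> g e2 e2 = 1 -> g e1 e2 = 0 ->
  (vadd (vscal s e1) (vscal t e2) = v0 <-> s = 0 /\ t = 0).
Proof.
  intros N1 N2 N12.
  assert (Coef1 : g (vadd (vscal s e1) (vscal t e2)) e1 = s * g e1 e1 + t * g e1 e2)
    by (unfold g, vadd, vscal; simpl; ring).
  assert (Coef2 : g (vadd (vscal s e1) (vscal t e2)) e2 = s * g e1 e2 + t * g e2 e2)
    by (unfold g, vadd, vscal; simpl; ring).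
  rewrite N1, N2, N12 in *.
  split.
  - intro Hzero; rewrite Hzero in Coef1, Coef2.
    unfold g, v0 in Coef1, Coef2; simpl in Coef1, Coef2.
    split; lra.
  - intros [Hs Ht]; rewrite Hs, Ht; unfold vadd, vscal, v0; simpl; f_equal; ring.
Qed.

Lemma mean_zero_iff_at_point (zu zv zuu zuv zvv e1 e2 : V4) :
  0 < E_ zu * G_ zv - F_ zu zv ^ 2 ->
  g e1 e1 = 1 -> g e2 e2 = 1 -> g e1 e2 = 0 ->
  ~ (kcurv zu zv zuu zuv zvv e1 e2 = 0 /\ varkappa zu zv zuu zuv zvv e1 e2 = 0) ->
  (Hmean zu zv zuu zuv zvv e1 e2 = v0 <->
   varkappa zu zv zuu zuv zvv e1 e2 ^ 2 - kcurv zu zv zuu zuv zvv e1 e2 = 0).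
Proof.
  intros Hreg N1 N2 N12 Hnf.
  assert (Hcube : (E_ zu * G_ zv - F_ zu zv ^ 2) ^ 3 <> 0)
    by (apply pow_nonzero; lra).
  assert (Hhalf : / (2 * (E_ zu * G_ zv - F_ zu zv ^ 2)) <> 0)
    by (apply Rinv_neq_0_compat; lra).
  rewrite Hmean_in_frame, vscal_eq_v0, orthonormal_combination_zero
    by assumption.
  rewrite varkappa_sq_minus_kcurv by exact Hreg.
  assert (Hdiv : forall X, X / (E_ zu * G_ zv - F_ zu zv ^ 2) ^ 3 = 0 <-> X = 0).
  { intro X; split; intro HX.
    - apply (Rmult_eq_reg_r (/ (E_ zu * G_ zv - F_ zu zv ^ 2) ^ 3));
        [ rewrite Rmult_0_l; exact HX | apply Rinv_neq_0_compat; exact Hcube ].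
    - rewrite HX; unfold Rdiv; ring. }
  rewrite Hdiv.
  symmetry.
  apply disc_zero_iff_mean_zero.
  - exact (E_pos_regular zu zv Hreg).
  - exact Hreg.
  - exact (not_flat_spanning zu zv zuu zuv zvv e1 e2 Hnf).
Qed.

Theorem proposition4p1 (D : R -> R -> Prop)
  (z zu zv zuu zuv zvv e1 e2 : R -> R -> V4)
  (Hsurf : surface_data D z zu zv zuu zuv zvv e1 e2)
  (Hnoflat : forall u v, D u v ->
     ~ (kcurv (zu u v) (zv u v) (zuu u v) (zuv u v) (zvv u v) (e1 u v) (e2 u v) = 0 /\
        varkappa (zu u v) (zv u v) (zuu u v) (zuv u v) (zvv u v) (e1 u v) (e2 u v) = 0)) :
  (forall u v, D u v ->
     (Hmean (zu u v) (zv u v) (zuu u v) (zuv u v) (zvv u v) (e1 u v) (e2 u v) = v0 <->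
      varkappa (zu u v) (zv u v) (zuu u v) (zuv u v) (zvv u v) (e1 u v) (e2 u v) ^ 2
      - kcurv (zu u v) (zv u v) (zuu u v) (zuv u v) (zvv u v) (e1 u v) (e2 u v) = 0)) /\
  ((forall u v, D u v ->
      Hmean (zu u v) (zv u v) (zuu u v) (zuv u v) (zvv u v) (e1 u v) (e2 u v) = v0) <->
   (forall u v, D u v ->
      varkappa (zu u v) (zv u v) (zuu u v) (zuv u v) (zvv u v) (e1 u v) (e2 u v) ^ 2
      - kcurv (zu u v) (zv u v) (zuu u v) (zuv u v) (zvv u v) (e1 u v) (e2 u v) = 0)).
Proof.
  assert (Pointwise : forall u v, D u v ->
     (Hmean (zu u v) (zv u v) (zuu u v) (zuv u v) (zvv u v) (e1 u v) (e2 u v) = v0 <->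
      varkappa (zu u v) (zv u v) (zuu u v) (zuv u v) (zvv u v) (e1 u v) (e2 u v) ^ 2
      - kcurv (zu u v) (zv u v) (zuu u v) (zuv u v) (zvv u v) (e1 u v) (e2 u v) = 0)).
  { intros u v Huv.
    destruct (Hsurf u v Huv) as (_ & _ & _ & _ & _ & Hreg & N1 & N2 & N12 & _).
    exact (mean_zero_iff_at_point _ _ _ _ _ _ _ Hreg N1 N2 N12 (Hnoflat u v Huv)). }
  split; [exact Pointwise |].
  split; intros Hall u v Huv; apply (Pointwise u v Huv), Hall, Huv.
Qed.
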